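(* Let $S$ be a finite, additively commutative, congruence-simple semiring. Then either $(S,+)$ is a group (hence $(S,+,\cdot)$ is a ring), or $S$ has an additively absorbing element, i.e. an element $\alpha$ with $\alpha+x=x+\alpha=\alpha$ for all $x\in S$.
   Context: A semiring is a nonempty set $S$ with two associative binary operations $+$ and $\cdot$ satisfying both distributive laws $a(b+c)=ab+ac$ and $(a+b)c=ac+bc$; no identity elements are assumed. It is additively commutative if $(S,+)$ is commutative. A congruence relation on $S$ is an equivalence relation $\sim$ such that $x_1\sim x_2$ implies $c+x_1\sim c+x_2$, $x_1+c\sim x_2+c$, $cx_1\sim cx_2$, $x_1c\sim x_2c$ for all $c\in S$. $S$ is congruence-simple if its only congruence relations are the identity relation and $S\times S$. *)

From mathcomp Require Import all_boot.
Set Implicit Arguments. Unset Strict Implicit. Unset Printing Implicit Defensive.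

Definition is_semiring (S : Type) (add mul : S -> S -> S) : Prop :=
  inhabited S /\
  (forall a b c, add a (add b c) = add (add a b) c) /\
  (forall a b c, mul a (mul b c) = mul (mul a b) c) /\
  (forall a b c, mul a (add b c) = add (mul a b) (mul a c)) /\
  (forall a b c, mul (add a b) c = add (mul a c) (mul b c)).

Definition add_commutative (S : Type) (add : S -> S -> S) : Prop :=
  forall a b, add a b = add b a.

Definition is_congruence (S : Type) (add mul : S -> S -> S) (r : S -> S -> Prop) : Prop :=
  (forall x, r x x) /\ (forall x y, r x y -> r y x) /\
  (forall x y z, r x y -> r y z -> r x z) /\
  (forall x1 x2 c, r x1 x2 ->
     r (add c x1) (add c x2) /\ r (add x1 c) (add x2 c) /\
     r (mul c x1) (mul c x2) /\ r (mul x1 c) (mul x2 c)).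

Definition congruence_simple (S : Type) (add mul : S -> S -> S) : Prop :=
  forall r, is_congruence add mul r ->
    (forall x y, r x y <-> x = y) \/ (forall x y, r x y).

Definition add_group (S : Type) (add : S -> S -> S) : Prop :=
  exists z : S, (forall x, add z x = x /\ add x z = x) /\
    (forall x, exists y, add x y = z /\ add y x = z).

Definition add_absorbing (S : Type) (add : S -> S -> S) (a : S) : Prop :=
  forall x, add a x = a /\ add x a = a.

From mathcomp Require Import all_boot.

Set Implicit Arguments.
Unset Strict Implicit.
Unset Printing Implicit Defensive.

(* The relation "x + z = y + z for some z" is a congruence, so by simplicity
   it is either equality or everything.  If it is equality, (S,+) is
   cancellative, and a finite cancellative commutative semigroup is a group.
   If it is everything, adding the sum of all elements of S sends every x to
   the same value, which is then absorbing. *)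

Definition add_cancel_rel (S : Type) (add : S -> S -> S) (x y : S) : Prop :=
  exists z, add x z = add y z.

Lemma foldr_mem_summand (T : eqType) (op : T -> T -> T) (x0 z : T) s :
  associative op -> commutative op -> z \in s ->
  exists b, foldr op x0 s = op z b.
Proof.
move=> opA opC; elim: s => [|h t IHt] //=.
rewrite in_cons => /orP[/eqP <-|/IHt[b ->]]; first by exists (foldr op x0 t).
by exists (op h b); rewrite opA (opC h z) -opA.
Qed.

Section CommutativeSemigroup.

Variables (S : Type) (add : S -> S -> S).
Hypotheses (addA : associative add) (addC : commutative add).

Lemma add_cancel_rel_trans (x y u : S) :
  add_cancel_rel add x y -> add_cancel_rel add y u -> add_cancel_rel add x u.
Proof.
move=> [z xz_yz] [w yw_uw]; exists (add z w).
by rewrite !addA xz_yz -(addA y) (addC z w) (addA y) yw_uw -addA (addC w z) addA.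
Qed.

Lemma is_congruence_add_cancel_rel (mul : S -> S -> S) :
  is_semiring add mul -> is_congruence add mul (add_cancel_rel add).
Proof.
move=> [[s0] [_ [_ [mulDr mulDl]]]].
split; first by exists s0.
split; first by move=> x y [z xz_yz]; exists z.
split; first exact: add_cancel_rel_trans.
move=> x1 x2 c [z x1z_x2z]; split; [|split; [|split]].
- by exists z; rewrite -!addA x1z_x2z.
- by exists z; rewrite (addC x1) (addC x2) -!addA x1z_x2z.
- by exists (mul c z); rewrite -!mulDr x1z_x2z.
- by exists (mul z c); rewrite -!mulDl x1z_x2z.
Qed.

End CommutativeSemigroup.

Section FiniteCommutativeSemigroup.

Variables (S : finType) (add : S -> S -> S).
Hypotheses (addA : associative add) (addC : commutative add).

Lemma cancellative_add_group :
  (forall z, injective (add z)) -> S -> add_group add.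
Proof.
move=> addI s0.
have addS x y : exists u, add x u = y.
  by have [g _ gK] := injF_bij (addI x); exists (g y).
have [e s0e] := addS s0 s0.
have adde x : add x e = x.
  by apply: (addI s0); rewrite addA (addC s0) -addA s0e.
exists e; split=> [x|x]; first by rewrite addC adde.
by have [y xy] := addS x e; exists y; rewrite (addC y).
Qed.

Lemma add_cancel_total_absorbing :
  (forall x y, add_cancel_rel add x y) -> S -> exists a, add_absorbing add a.
Proof.
move=> total s0.
pose sum := foldr add s0 (enum S).
have addsum x : add x sum = add s0 sum.
  have [z xz_s0z] := total x s0.
  have [b sumE] := foldr_mem_summand s0 addA addC (mem_enum S z).
  by rewrite /sum sumE !addA xz_s0z.
exists (add s0 sum) => x; suff absorb : add x (add s0 sum) = add s0 sum.
  by rewrite addC absorb.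
by rewrite addA addsum.
Qed.

End FiniteCommutativeSemigroup.

Theorem lemma2p2 (S : finType) (add mul : S -> S -> S) :
  is_semiring add mul -> add_commutative add -> congruence_simple add mul ->
  add_group add \/ exists a : S, add_absorbing add a.
Proof.
move=> Ssemi addC simple; have [[s0] [addA _]] := Ssemi.
case: (simple _ (is_congruence_add_cancel_rel addA addC Ssemi)) => [cancel_eq|total].
- left; apply: cancellative_add_group => // z x y zx_zy.
  by apply/cancel_eq; exists z; rewrite !(addC _ z).
- by right; apply: add_cancel_total_absorbing.
Qed.
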